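(* Let $s\ge1$ and for $1\le i\le s$ let $K_i$ be a simplicial complex that is nice on $[n_i]$, with $d_i=\dim K_i$. Put $d=\sum_{i=1}^s d_i+s-1=\dim(K_1*\cdots*K_s)$ and suppose $\sum_{i=1}^s n_i-s-2=2d$. Then for every $i$, $n_i=2d_i+3$ and $K_i$ consists of all subsets of $[n_i]$ of cardinality at most $d_i+1$, i.e. $K_i=(\Delta_{2d_i+2})^{\le d_i}$. Consequently $\mathcal{F}_d=\{(K_1*\cdots*K_s)^d : s\ge1,\ d_i\ge0,\ K_i=(\Delta_{2d_i+2})^{\le d_i},\ \sum_{i=1}^s d_i=d-s+1\}$.
   Context: A simplicial complex is a nonempty family of subsets of a finite vertex set closed under subsets; $\dim F=|F|-1$. A complex $K$ with vertex set identified with a subset of $[n]$ is nice on $[n]$ if for every $F\subseteq[n]$ exactly one of $F$, $[n]\setminus F$ lies in $K$. The join $K_1*K_2$ has vertex set $V(K_1)\sqcup V(K_2)$ and simplices $F_1\sqcup F_2$ with $F_i\in K_i$ (iterated for several factors). $\Delta_m$ is the complex of all subsets of an $(m+1)$-element set and $K^{\le k}$ is the subcomplex of simplices of dimension at most $k$. For a $d$-dimensional complex $K$, $(K)^d$ denotes the $(d+1)$-graph on $V(K)$ whose edges are the $d$-simplices of $K$. $\mathcal{F}_d$ is the family of $(d+1)$-graphs $(K_1*\cdots*K_s)^d$ where $s\ge1$, each $K_i$ is nice on $[n_i]$, $\dim(K_1*\cdots*K_s)=d$, and $n_1+\cdots+n_s=2d+s+2$. *)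

From HB Require Import structures.
From mathcomp Require Import all_boot all_order all_algebra.
Set Implicit Arguments. Unset Strict Implicit. Unset Printing Implicit Defensive.
Import Order.TTheory GRing.Theory Num.Theory.

Definition is_complex (n : nat) (K : {set {set 'I_n}}) : bool :=
  (K != set0) &&
  [forall F in K, forall G : {set 'I_n}, (G \subset F) ==> (G \in K)].

Definition nice (n : nat) (K : {set {set 'I_n}}) : bool :=
  [forall F : {set 'I_n}, (F \in K) (+) ((~: F) \in K)].

Definition cdim (n : nat) (K : {set {set 'I_n}}) : int :=
  ((\max_(F in K) #|F|)%:Z - 1)%R.

(* (Δ_{n-1})^{≤ k}: all subsets of [n] of dimension at most k,
   i.e. of cardinality at most k+1. *)
Definition skel (n : nat) (k : int) : {set {set 'I_n}} :=
  [set F : {set 'I_n} | (#|F|%:Z <= k + 1)%R].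

From HB Require Import structures.
From mathcomp Require Import all_boot all_order all_algebra.
From mathcomp Require Import zify.
Import Order.TTheory GRing.Theory Num.Theory.
Set Implicit Arguments.

(* If the largest face of a nice complex K on [n] has m vertices, then n <= 2m + 1:
   otherwise an (m+1)-set and its complement, of size >= m+1, would both miss K.
   The dimension hypothesis says that sum n_i = sum (2 m_i + 1), so equality holds
   for every factor; and when n = 2m + 1, every set with at most m elements has a
   complement with at least m + 1 elements, which is not in K, so the set is in K. *)

Lemma exists_set_card (T : finType) (k : nat) :
  (k <= #|T|)%N -> exists A : {set T}, #|A| = k.
Proof.
rewrite -bin_gt0 -card_draws => /card_gt0P [A].
by rewrite inE => /eqP; exists A.
Qed.

Lemma card_setC_ord (n : nat) (F : {set 'I_n}) : #|~: F| = (n - #|F|)%N.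
Proof. by rewrite cardsCs setCK card_ord. Qed.

Definition maxcard (n : nat) (K : {set {set 'I_n}}) : nat := \max_(F in K) #|F|.

Lemma cdimE (n : nat) (K : {set {set 'I_n}}) : cdim K = ((maxcard K)%:Z - 1)%R.
Proof. by []. Qed.

Lemma leq_maxcard (n : nat) (K : {set {set 'I_n}}) (F : {set 'I_n}) :
  F \in K -> (#|F| <= maxcard K)%N.
Proof. exact: leq_bigmax_cond. Qed.

Lemma nice_card_bound (n : nat) (K : {set {set 'I_n}}) :
  nice K -> (n <= 2 * maxcard K + 1)%N.
Proof.
move=> /forallP niceK; case: (leqP n (maxcard K)) => [|ltmn]; first lia.
have [F cardF] : exists F : {set 'I_n}, #|F| = (maxcard K).+1.
  by apply: exists_set_card; rewrite card_ord.
have FnotK : F \notin K by apply/negP => /leq_maxcard; lia.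
have := niceK F; rewrite (negbTE FnotK) /= => /leq_maxcard.
rewrite card_setC_ord; lia.
Qed.

Lemma nice_eq_skel (n : nat) (K : {set {set 'I_n}}) :
  nice K -> n = (2 * maxcard K + 1)%N -> K = skel n (cdim K).
Proof.
move=> /forallP niceK def_n; apply/setP => F; rewrite inE cdimE subrK lez_nat.
apply/idP/idP; first exact: leq_maxcard.
move=> smallF; have := niceK F.
suff -> : (~: F \in K) = false by rewrite addbF.
by apply/negP => /leq_maxcard; rewrite card_setC_ord; lia.
Qed.

Lemma eq_of_leq_sum (I : finType) (E1 E2 : I -> nat) :
  (forall i, E1 i <= E2 i)%N -> (\sum_i E1 i = \sum_i E2 i)%N -> forall i, E1 i = E2 i.
Proof.
move=> leE /eqP; rewrite (leqif_sum (fun i _ => leqif_eq (leE i))) => /forallP eqE i.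
exact/eqP/(implyP (eqE i)).
Qed.

Local Open Scope ring_scope.

Lemma sum_cdim (s : nat) (n : 'I_s -> nat) (K : forall i, {set {set 'I_(n i)}}) :
  \sum_(i < s) cdim (K i) = (\sum_(i < s) maxcard (K i))%N%:Z - s%:Z.
Proof.
rewrite big_split /= sumrN sumr_const card_ord -!natz natr_sum.
by congr (_ - _); apply: eq_bigr => i _; rewrite natz.
Qed.

Lemma mem_skel (n e : nat) (F : {set 'I_n}) :
  (F \in skel n e%:Z) = (#|F| <= e.+1)%N.
Proof. by rewrite inE -addn1 lez_nat addn1. Qed.

Lemma skel_is_complex (n e : nat) : is_complex (skel n e%:Z).
Proof.
apply/andP; split; first by apply/set0Pn; exists set0; rewrite mem_skel cards0.
apply/forallP => F; apply/implyP; rewrite mem_skel => smallF.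
apply/forallP => G; apply/implyP => /subset_leq_card leGF.
by rewrite mem_skel (leq_trans leGF).
Qed.

Lemma skel_nice (e : nat) : nice (skel (2 * e + 3) e%:Z).
Proof.
apply/forallP => F; rewrite !mem_skel card_setC_ord.
have := max_card F; rewrite card_ord.
by case: (leqP #|F| e.+1) => /= ? ?; lia.
Qed.

Lemma cdim_skel (n e : nat) : (e < n)%N -> cdim (skel n e%:Z) = e%:Z.
Proof.
move=> lt_en; rewrite cdimE.
suff -> : maxcard (skel n e%:Z) = e.+1 by rewrite -addn1 PoszD addrK.
apply/eqP; rewrite eqn_leq; apply/andP; split.
  by apply/bigmax_leqP => F; rewrite mem_skel.
have [F cardF] : exists F : {set 'I_n}, #|F| = e.+1.
  by apply: exists_set_card; rewrite card_ord.
by rewrite -cardF leq_maxcard // mem_skel cardF.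
Qed.

Theorem lemma3p8 :
  (forall (s : nat) (n : 'I_s -> nat) (K : forall i : 'I_s, {set {set 'I_(n i)}})
     (d : int),
     (0 < s)%N ->
     (forall i, is_complex (K i) /\ nice (K i)) ->
     d = \sum_(i < s) cdim (K i) + s%:Z - 1 ->
     (\sum_(i < s) n i)%N%:Z - s%:Z - 2 = 2 * d ->
     forall i : 'I_s,
       (n i)%:Z = 2 * cdim (K i) + 3 /\ K i = skel (n i) (cdim (K i)))
  /\
  (* the converse ingredient behind "Consequently": for every e >= 0,
     (Delta_{2e+2})^{<= e} is a nice simplicial complex on [2e+3] of dimension e *)
  (forall e : nat,
     is_complex (skel (2 * e + 3)%N e%:Z) /\ nice (skel (2 * e + 3)%N e%:Z) /\
     cdim (skel (2 * e + 3)%N e%:Z) = e%:Z).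
Proof.
split=> [s n K d _ complexK -> sum_n i|e]; last first.
  by split; [|split]; [exact: skel_is_complex | exact: skel_nice | apply: cdim_skel; lia].
have niceK j : nice (K j) by case: (complexK j).
have sum_bound : (\sum_(j < s) (2 * maxcard (K j) + 1) = 2 * \sum_(j < s) maxcard (K j) + s)%N.
  by rewrite big_split /= -big_distrr sum_nat_const card_ord muln1.
have sum_n_tight : (\sum_(j < s) n j = 2 * \sum_(j < s) maxcard (K j) + s)%N.
  by move: sum_n; rewrite sum_cdim; lia.
have tight : forall j, n j = (2 * maxcard (K j) + 1)%N.
  apply: eq_of_leq_sum => [j|]; first exact: nice_card_bound (niceK j).
  by rewrite sum_bound; exact: sum_n_tight.
split; first by have := tight i; rewrite cdimE; lia.
exact: nice_eq_skel (niceK i) (tight i).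
Qed.
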